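(* In the process algebra $\mathcal{G}$ described in the context, suppose $C\|Z\mathbb{P}_v^{1}\approx C\|Z\mathbb{P}_v^{2}\mathbb{P}_u^{2}$ for some $\mathbb{P}_v^{1},\mathbb{P}_v^{2}$ (each a possibly empty sequential composition of constants from $\{V_k:k\in\mathcal{N}\}$) and some nonempty sequential composition $\mathbb{P}_u^{2}\neq\epsilon$ of constants from $\{U_k:k\in\mathcal{N}\}$. Then INST has a solution.
   Context: Process algebras: a triple $(\mathcal{C},\mathcal{A},\Delta)$ of finitely many constants, actions (including silent $\tau$) and rules $X\stackrel{\ell}{\longrightarrow}P$. Processes: $P::=\epsilon\mid X\mid PP'\mid P\|P'$, sequential composition associative, parallel composition associative and commutative, $\epsilon$ a unit for both. Semantics: rules of $\Delta$; if $P\stackrel{\ell}{\longrightarrow}P'$ then $PQ\stackrel{\ell}{\longrightarrow}P'Q$, $P\|Q\stackrel{\ell}{\longrightarrow}P'\|Q$, $Q\|P\stackrel{\ell}{\longrightarrow}Q\|P'$. $\Longrightarrow$ is the reflexive transitive closure of $\stackrel{\tau}{\longrightarrow}$; $\stackrel{\widehat{\ell}}{\Longrightarrow}$ is $\Longrightarrow\stackrel{\ell}{\longrightarrow}\Longrightarrow$ if $\ell\ne\tau$ and $\Longrightarrow$ if $\ell=\tau$. Weak bisimilarity $\approx$ is the largest relation $\mathcal{B}$ such that whenever $P\mathcal{B}Q$ and $P\stackrel{\ell}{\longrightarrow}P'$ there is $Q'$ with $Q\stackrel{\widehat{\ell}}{\Longrightarrow}Q'$, $P'\mathcal{B}Q'$,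 and symmetrically. The algebra $\mathcal{G}$: fix a finite alphabet $\Sigma$ with $|\Sigma|\ge2$ and a Post Correspondence instance $\mathrm{INST}=\{(u_1,v_1),\dots,(u_n,v_n)\}$ with $u_k,v_k\in\Sigma^{+}$; INST has a solution if there exist $m\ge1$ and $i_1,\dots,i_m\in\{1,\dots,n\}$ with $u_{i_1}\cdots u_{i_m}=v_{i_1}\cdots v_{i_m}$. Let $\mathcal{N}=\{1,\dots,n\}$. Actions: $\{\lambda_U,\lambda_V,\lambda_D,\lambda_I,\lambda_S,\lambda_Z\}\cup\mathcal{N}\cup\Sigma\cup\{\tau\}$. Constants: $X,Y,Z,I,S,C,C',D,G,G',G_u,G_v,G_v'$, $U_k,V_k$ ($k\in\mathcal{N}$), and $W(\omega,k),W(\omega,0)$ for $k\in\mathcal{N}$ and $\omega$ a (possibly empty) suffix of $u_k$ or of $v_k$; $\mathcal{W}$ is the set of these $W$-constants. Rules (with $k$ ranging over $\mathcal{N}$, $a$ over $\Sigma$, $W$ over $\mathcal{W}$): $X\stackrel{\lambda_U}{\longrightarrow}D\|G_v$, $X\stackrel{\tau}{\longrightarrow}D$, $Y\stackrel{\tau}{\longrightarrow}D$, $D\stackrel{\tau}{\longrightarrow}D\|G_u$, $D\stackrel{\lambda_D}{\longrightarrow}C$; $G_u\stackrel{\tau}{\longrightarrow}G_uU_k$, $G_u\stackrel{\lambda_U}{\longrightarrow}G_vU_k$, $G_u\stackrel{\tau}{\longrightarrow}G_v'$, $G_v'\stackrel{\tau}{\longrightarrow}G_v'V_k$, $G_v'\stackrel{\tau}{\longrightarrow}Z$;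 $G_v\stackrel{\tau}{\longrightarrow}G_vV_k$, $G_v\stackrel{\tau}{\longrightarrow}\epsilon$, $G_v\stackrel{\lambda_V}{\longrightarrow}Z$, $Z\stackrel{\tau}{\longrightarrow}\epsilon$, $Z\stackrel{\lambda_Z}{\longrightarrow}\epsilon$; $C\stackrel{\lambda_I}{\longrightarrow}I$, $C\stackrel{\lambda_S}{\longrightarrow}S$, $C\stackrel{\tau}{\longrightarrow}C\|G$, $C\stackrel{\tau}{\longrightarrow}C\|G_v$; $G\stackrel{\tau}{\longrightarrow}GU_k$, $G\stackrel{\tau}{\longrightarrow}GV_k$, $G\stackrel{\tau}{\longrightarrow}\epsilon$; $I\stackrel{\lambda_I}{\longrightarrow}C'$, $I\stackrel{k}{\longrightarrow}I$, $S\stackrel{\lambda_S}{\longrightarrow}C'$, $S\stackrel{a}{\longrightarrow}S$, $C'\stackrel{\tau}{\longrightarrow}C'\|G'$, $C'\stackrel{\tau}{\longrightarrow}\epsilon$; $G'\stackrel{\tau}{\longrightarrow}G'U_k$, $G'\stackrel{\tau}{\longrightarrow}G'V_k$, $G'\stackrel{\tau}{\longrightarrow}G'W$, $G'\stackrel{\tau}{\longrightarrow}G_v$, $G'\stackrel{\tau}{\longrightarrow}Z$; $U_k\stackrel{\tau}{\longrightarrow}W(u_k,k)$, $V_k\stackrel{\tau}{\longrightarrow}W(v_k,k)$; $W(a\omega,k)\stackrel{a}{\longrightarrow}W(\omega,k)$, $W(a\omega,0)\stackrel{a}{\longrightarrow}W(\omega,0)$, $W(\omega,k)\stackrel{k}{\longrightarrow}W(\omega,0)$,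 $W(a\omega,k)\stackrel{\tau}{\longrightarrow}W(\omega,k)$, $W(a\omega,0)\stackrel{\tau}{\longrightarrow}W(\omega,0)$, $W(\omega,k)\stackrel{\tau}{\longrightarrow}W(\omega,0)$, $W(\epsilon,0)\stackrel{\tau}{\longrightarrow}\epsilon$. *)

From mathcomp Require Import all_boot.
Set Implicit Arguments. Unset Strict Implicit. Unset Printing Implicit Defensive.

Section ProcessAlgebraG.
Variable Sigma : finType.
(* INST = [:: (u_1,v_1); ...; (u_n,v_n)]; index k in N = {1..n} refers to the
   (k-1)-th entry of the list. *)
Variable inst : seq (seq Sigma * seq Sigma).

Definition inN (k : nat) : bool := (0 < k) && (k <= size inst).
Definition uw (k : nat) : seq Sigma := (nth ([::], [::]) inst k.-1).1.
Definition vw (k : nat) : seq Sigma := (nth ([::], [::]) inst k.-1).2.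

Definition pcp_solution : Prop :=
  exists ix : seq nat, ix != [::] /\ all inN ix /\
    flatten (map uw ix) = flatten (map vw ix).

(* Constants. [cW w k] is W(w,k); only those in the set 𝒲 are used by the rules. *)
Inductive const : Type :=
| cX | cY | cZ | cI | cS | cC | cC' | cD | cG | cG' | cGu | cGv | cGv'
| cU (k : nat) | cV (k : nat) | cW (w : seq Sigma) (k : nat).

Definition validW (w : seq Sigma) (k : nat) : Prop :=
  if k == 0 then exists j, inN j /\ (suffix w (uw j) || suffix w (vw j))
  else inN k /\ (suffix w (uw k) || suffix w (vw k)).

Inductive act : Type :=
| lU | lV | lD | lI | lS | lZ | aIdx (k : nat) | aSym (a : Sigma) | tau.

Inductive proc : Type :=
| Eps | Con (c : const) | Seq (p q : proc) | Par (p q : proc).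

Inductive scong : proc -> proc -> Prop :=
| sc_refl p : scong p p
| sc_sym p q : scong p q -> scong q p
| sc_trans p q r : scong p q -> scong q r -> scong p r
| sc_seq p p' q q' : scong p p' -> scong q q' -> scong (Seq p q) (Seq p' q')
| sc_par p p' q q' : scong p p' -> scong q q' -> scong (Par p q) (Par p' q')
| sc_seqA p q r : scong (Seq (Seq p q) r) (Seq p (Seq q r))
| sc_seq_epsl p : scong (Seq Eps p) p
| sc_seq_epsr p : scong (Seq p Eps) p
| sc_parA p q r : scong (Par (Par p q) r) (Par p (Par q r))
| sc_parC p q : scong (Par p q) (Par q p)
| sc_par_eps p : scong (Par Eps p) p.

Inductive delta : const -> act -> proc -> Prop :=
| dX1 : delta cX lU (Par (Con cD) (Con cGv))
| dX2 : delta cX tau (Con cD)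
| dY : delta cY tau (Con cD)
| dD1 : delta cD tau (Par (Con cD) (Con cGu))
| dD2 : delta cD lD (Con cC)
| dGu1 k : inN k -> delta cGu tau (Seq (Con cGu) (Con (cU k)))
| dGu2 k : inN k -> delta cGu lU (Seq (Con cGv) (Con (cU k)))
| dGu3 : delta cGu tau (Con cGv')
| dGv'1 k : inN k -> delta cGv' tau (Seq (Con cGv') (Con (cV k)))
| dGv'2 : delta cGv' tau (Con cZ)
| dGv1 k : inN k -> delta cGv tau (Seq (Con cGv) (Con (cV k)))
| dGv2 : delta cGv tau Eps
| dGv3 : delta cGv lV (Con cZ)
| dZ1 : delta cZ tau Eps
| dZ2 : delta cZ lZ Eps
| dC1 : delta cC lI (Con cI)
| dC2 : delta cC lS (Con cS)
| dC3 : delta cC tau (Par (Con cC) (Con cG))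
| dC4 : delta cC tau (Par (Con cC) (Con cGv))
| dG1 k : inN k -> delta cG tau (Seq (Con cG) (Con (cU k)))
| dG2 k : inN k -> delta cG tau (Seq (Con cG) (Con (cV k)))
| dG3 : delta cG tau Eps
| dI1 : delta cI lI (Con cC')
| dI2 k : inN k -> delta cI (aIdx k) (Con cI)
| dS1 : delta cS lS (Con cC')
| dS2 a : delta cS (aSym a) (Con cS)
| dC'1 : delta cC' tau (Par (Con cC') (Con cG'))
| dC'2 : delta cC' tau Eps
| dG'1 k : inN k -> delta cG' tau (Seq (Con cG') (Con (cU k)))
| dG'2 k : inN k -> delta cG' tau (Seq (Con cG') (Con (cV k)))
| dG'3 w k : validW w k -> delta cG' tau (Seq (Con cG') (Con (cW w k)))
| dG'4 : delta cG' tau (Con cGv)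
| dG'5 : delta cG' tau (Con cZ)
| dU k : inN k -> delta (cU k) tau (Con (cW (uw k) k))
| dV k : inN k -> delta (cV k) tau (Con (cW (vw k) k))
| dWa a w k : validW (a :: w) k -> delta (cW (a :: w) k) (aSym a) (Con (cW w k))
| dWk w k : inN k -> validW w k -> delta (cW w k) (aIdx k) (Con (cW w 0))
| dWt a w k : validW (a :: w) k -> delta (cW (a :: w) k) tau (Con (cW w k))
| dWkt w k : inN k -> validW w k -> delta (cW w k) tau (Con (cW w 0))
| dWe : validW [::] 0 -> delta (cW [::] 0) tau Eps.

Inductive step : proc -> act -> proc -> Prop :=
| st_rule c l p : delta c l p -> step (Con c) l p
| st_seq p l p' q : step p l p' -> step (Seq p q) l (Seq p' q)
| st_parl p l p' q : step p l p' -> step (Par p q) l (Par p' q)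
| st_parr p l p' q : step p l p' -> step (Par q p) l (Par q p')
| st_cong p p1 l p2 p' :
    scong p p1 -> step p1 l p2 -> scong p2 p' -> step p l p'.

Inductive taus : proc -> proc -> Prop :=
| taus_refl p : taus p p
| taus_step p q r : step p tau q -> taus q r -> taus p r.

Definition wstep (p : proc) (l : act) (q : proc) : Prop :=
  match l with
  | tau => taus p q
  | _ => exists p1 p2, taus p p1 /\ step p1 l p2 /\ taus p2 q
  end.

Definition weak_bisimulation (B : proc -> proc -> Prop) : Prop :=
  forall p q, B p q ->
    (forall l p', step p l p' -> exists2 q', wstep q l q' & B p' q') /\
    (forall l q', step q l q' -> exists2 p', wstep p l p' & B p' q').

Definition wbisim (p q : proc) : Prop :=
  exists B, weak_bisimulation B /\ B p q.

Definition seqs (ps : seq proc) : proc := foldr Seq Eps ps.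
Definition PV (ks : seq nat) : proc := seqs (map (fun k => Con (cV k)) ks).
Definition PU (ks : seq nat) : proc := seqs (map (fun k => Con (cU k)) ks).

End ProcessAlgebraG.

From HB Require Import structures.
From mathcomp Require Import all_boot.
Set Implicit Arguments. Unset Strict Implicit. Unset Printing Implicit Defensive.

(* Suppose [C || Z bL] and [C || Z bR] are weakly bisimilar, where bL and bR are
   words of constants U_k, V_k.  Let the left process play [C -lI-> I] and then
   [Z -lZ-> eps].  On the right, only [C] can answer [lI], and only the head [Z]
   of the thread [Z bR] can answer [lZ]; afterwards that thread may unfold bR,
   emitting the concatenated letters of the u_k, v_k it names.  On the left,
   [I] performs no letter and all letters come from the thread bL, so the letter
   word of bR is a subsequence of that of bL.  Playing [lS] instead of [lI] (now
   [S] performs no index) gives the same for index words, and by symmetry both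
   words of bL and bR coincide.  With bL = V_v1 and bR = V_v2 U_u2 this says
   v1 = v2 ++ u2 and v_v1 = v_v2 ++ u_u2, hence v_u2 = u_u2. *)

Section ProcessAlgebraG.
Variable Sigma : finType.
Variable inst : seq (seq Sigma * seq Sigma).
Local Notation const := (const Sigma).
Local Notation proc := (proc Sigma).
Local Notation act := (act Sigma).
Local Notation delta := (delta inst).
Local Notation step := (step inst).
Local Notation taus := (taus inst).
Arguments cX {Sigma}. Arguments cY {Sigma}. Arguments cZ {Sigma}. Arguments cI {Sigma}.
Arguments cS {Sigma}. Arguments cC {Sigma}. Arguments cC' {Sigma}. Arguments cD {Sigma}.
Arguments cG {Sigma}. Arguments cG' {Sigma}. Arguments cGu {Sigma}. Arguments cGv {Sigma}.
Arguments cGv' {Sigma}. Arguments cU {Sigma}. Arguments cV {Sigma}. Arguments cW {Sigma}.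
Arguments Eps {Sigma}. Arguments lU {Sigma}. Arguments lV {Sigma}. Arguments lD {Sigma}.
Arguments lI {Sigma}. Arguments lS {Sigma}. Arguments lZ {Sigma}. Arguments aIdx {Sigma}.
Arguments aSym {Sigma}. Arguments tau {Sigma}.

Definition const_code (c : const) : nat * (seq Sigma * nat) :=
  match c with
  | cX => (0, ([::], 0)) | cY => (1, ([::], 0)) | cZ => (2, ([::], 0))
  | cI => (3, ([::], 0)) | cS => (4, ([::], 0)) | cC => (5, ([::], 0))
  | cC' => (6, ([::], 0)) | cD => (7, ([::], 0)) | cG => (8, ([::], 0))
  | cG' => (9, ([::], 0)) | cGu => (10, ([::], 0)) | cGv => (11, ([::], 0))
  | cGv' => (12, ([::], 0)) | cU k => (13, ([::], k)) | cV k => (14, ([::], k))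
  | cW w k => (15, (w, k)) end.

Definition const_decode (x : nat * (seq Sigma * nat)) : option const :=
  match x with
  | (0, _) => Some cX | (1, _) => Some cY | (2, _) => Some cZ
  | (3, _) => Some cI | (4, _) => Some cS | (5, _) => Some cC
  | (6, _) => Some cC' | (7, _) => Some cD | (8, _) => Some cG
  | (9, _) => Some cG' | (10, _) => Some cGu | (11, _) => Some cGv
  | (12, _) => Some cGv' | (13, (_, k)) => Some (cU k) | (14, (_, k)) => Some (cV k)
  | (15, (w, k)) => Some (cW w k) | _ => None end.

Lemma const_codeK : pcancel const_code const_decode. Proof. by case. Qed.
HB.instance Definition _ := Equality.copy const (pcan_type const_codeK).

Local Notation threads := (seq (seq const)).

(* [den p] reads p, up to structural congruence, as a multiset of threads
   (nonempty sequential words of constants); it is [None] when a parallel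
   composition occurs under a sequential one. *)
Definition tseq (a b : option threads) : option threads :=
  match a, b with
  | Some [::], _ => b
  | _, Some [::] => a
  | Some [:: s], Some [:: t] => Some [:: s ++ t]
  | _, _ => None end.

Definition tpar (a b : option threads) : option threads :=
  match a, b with Some x, Some y => Some (x ++ y) | _, _ => None end.

Definition tequiv (a b : option threads) : Prop :=
  match a, b with Some x, Some y => perm_eq x y | None, None => True | _, _ => False end.

Fixpoint den (p : proc) : option threads :=
  match p with
  | Eps => Some [::]
  | Con c => Some [:: [:: c]]
  | Seq p q => tseq (den p) (den q)
  | Par p q => tpar (den p) (den q) end.

Definition thread (t : seq const) : threads := if t is [::] then [::] else [:: t].

Lemma tequiv_refl a : tequiv a a. Proof. by case: a => //= x; exact: perm_refl. Qed.

Lemma tequiv_sym a b : tequiv a b -> tequiv b a.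
Proof. by case: a; case: b => //= x y; rewrite perm_sym. Qed.

Lemma tequiv_trans a b c : tequiv a b -> tequiv b c -> tequiv a c.
Proof.
by case: a => [x|]; case: b => [y|]; case: c => [z|] //= h1 h2; apply: perm_trans h1 h2.
Qed.

Lemma perm_eq_shape (x y : threads) : perm_eq x y ->
  [\/ x = [::] /\ y = [::], exists t, x = [:: t] /\ y = [:: t] | 1 < size x /\ 1 < size y].
Proof.
move=> h; have hs := perm_size h.
case: x h hs => [|a [|b x]]; case: y => [|c [|d y]] //= h hs; try by [constructor 1|constructor 3].
constructor 2; exists a; split => //; congr [:: _].
by have := perm_mem h a; rewrite !inE eqxx => /esym/eqP.
Qed.

Lemma tseq0r a : tseq a (Some [::]) = a.
Proof. by case: a => // [[|t [|t' x]]]. Qed.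

Lemma tseqA a b c : tseq (tseq a b) c = tseq a (tseq b c).
Proof.
case: a => [[|a1 [|a2 a]]|]; case: b => [[|b1 [|b2 b]]|]; case: c => [[|c1 [|c2 c]]|] //=;
  by rewrite ?catA.
Qed.

Lemma tparA a b c : tpar (tpar a b) c = tpar a (tpar b c).
Proof. by case: a; case: b; case: c => //= *; rewrite catA. Qed.

Lemma tpar0r a : tequiv (tpar a (Some [::])) a.
Proof. by case: a => //= x; rewrite cats0 perm_refl. Qed.

Lemma tseq_thread s t : tseq (Some (thread s)) (Some (thread t)) = Some (thread (s ++ t)).
Proof. by case: s => [|x s]; case: t => [|y t] //=; rewrite cats0. Qed.

Lemma tseq_equiv a a' b b' : tequiv a a' -> tequiv b b' -> tequiv (tseq a b) (tseq a' b').
Proof.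
case: a => [x|]; case: a' => [x'|] //=; case: b => [y|]; case: b' => [y'|] //= hx hy.
- case: (perm_eq_shape hx) => [[-> ->]|[t [-> ->]]|[h1 h2]];
  case: (perm_eq_shape hy) => [[-> ->]|[s [-> ->]]|[g1 g2]] //=;
  try (case: x h1 hx => [|? [|? ?]] // _ hx; case: x' h2 hx => [|? [|? ?]] // _ hx);
  try (case: y g1 hy => [|? [|? ?]] // _ hy; case: y' g2 hy => [|? [|? ?]] // _ hy);
  rewrite /= //; exact: perm_refl.
- by case: (perm_eq_shape hx) => [[-> ->]|[t [-> ->]]|[h1 h2]] //=;
     case: x h1 hx => [|? [|? ?]] //; case: x' h2 => [|? [|? ?]].
- by case: (perm_eq_shape hy) => [[-> ->]|[t [-> ->]]|[h1 h2]] //=;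
     case: y h1 hy => [|? [|? ?]] //; case: y' h2 => [|? [|? ?]].
Qed.

Lemma tpar_equiv a a' b b' : tequiv a a' -> tequiv b b' -> tequiv (tpar a b) (tpar a' b').
Proof.
case: a => [x|]; case: a' => [x'|] //=; case: b => [y|]; case: b' => [y'|] //= hx hy.
by rewrite (perm_cat hx hy).
Qed.

Lemma scong_den p q : scong p q -> tequiv (den p) (den q).
Proof.
elim => {p q} /=.
- move=> p; exact: tequiv_refl.
- by move=> p q _; apply: tequiv_sym.
- by move=> p q r _ h1 _ h2; apply: tequiv_trans h1 h2.
- by move=> p p' q q' _ h1 _ h2; apply: tseq_equiv.
- by move=> p p' q q' _ h1 _ h2; apply: tpar_equiv.
- move=> p q r; rewrite tseqA; exact: tequiv_refl.
- move=> p; exact: tequiv_refl.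
- move=> p; rewrite tseq0r; exact: tequiv_refl.
- move=> p q r; rewrite tparA; exact: tequiv_refl.
- move=> p q; case: (den p) => [x|]; case: (den q) => [y|] //=; by rewrite perm_catC.
- move=> p; case: (den p) => //= x; exact: perm_refl.
Qed.

Lemma den_threads_nonempty p D : den p = Some D -> all (fun t => 0 < size t) D.
Proof.
elim: p D => [|c|p IHp q IHq|p IHp q IHq] D /=.
- by case=> <-.
- by case=> <-.
- case: (den p) IHp => [x|] IHp; last by case: (den q) => // [[|? [|? ?]]].
  case: (den q) IHq => [y|] IHq; last by case: x {IHp} => [|? [|? ?]].
  have := IHp _ erefl; have := IHq _ erefl.
  case: x {IHp} => [|a [|b x]]; case: y {IHq} => [|c [|d y]] //= hy hx;
  case=> <-; rewrite //= ?size_cat ?addn_gt0 //; by move: hx => /andP[-> _].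
- case: (den p) IHp => [x|] IHp; case: (den q) IHq => [y|] IHq // [<-].
  by rewrite all_cat IHp // IHq.
Qed.

Lemma step_den p l p' : step p l p' -> forall D, den p = Some D ->
  exists c t D0 r, [/\ perm_eq D ((c :: t) :: D0), delta c l r &
    tequiv (den p') (tpar (tseq (den r) (Some (thread t))) (Some D0))].
Proof.
elim => {p l p'}.
- move=> c l r h D /= [<-]; exists c, [::], [::], r; split => //.
  rewrite tseq0r; apply: tequiv_sym; exact: tpar0r.
- move=> p l p' q hs IH D /=.
  case Ep: (den p) => [x|]; last by case: (den q) => // [[|? [|? ?]]].
  case Eq: (den q) => [y|]; last by case: x {Ep} => [|? [|? ?]].
  have yne := den_threads_nonempty Eq.
  case: x Ep => [|t1 [|t1' x]] Ep; case: y Eq yne => [|t2 [|t2' y]] Eq yne //= [<-];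
    have [c [t [D0 [r [hp hd ho]]]]] := IH _ Ep; try by move/perm_size: hp.
  + by exists c, t, D0, r; split => //; rewrite tseq0r.
  + case: (perm_eq_shape hp) => [[//]|[t0 [[e1] [e2 e3]]]|[//]].
    subst; exists c, (t ++ t2), [::], r; split => //.
    apply: tequiv_trans (tequiv_sym (tpar0r _)).
    have -> : Some [:: t2] = Some (thread t2) by case: t2 {Eq} yne.
    rewrite -tseq_thread -tseqA; apply: tseq_equiv (tequiv_refl _).
    exact: tequiv_trans ho (tpar0r _).
  + by exists c, t, D0, r; split => //; rewrite tseq0r.
- move=> p l p' q hs IH D /=.
  case Ep: (den p) => [x|]; case Eq: (den q) => [y|] // [<-].
  have [c [t [D0 [r [hp hd ho]]]]] := IH _ Ep.
  exists c, t, (D0 ++ y), r; split => //=; first by rewrite -cat_cons perm_cat2r.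
  apply: tequiv_trans (tpar_equiv ho (tequiv_refl _)) _.
  rewrite tparA; exact: tequiv_refl.
- move=> p l p' q hs IH D /=.
  case Ep: (den p) => [x|]; case Eq: (den q) => [y|] // [<-].
  have [c [t [D0 [r [hp hd ho]]]]] := IH _ Ep.
  exists c, t, (y ++ D0), r; split => //=.
    apply: perm_trans (_ : perm_eq _ (y ++ (c :: t) :: D0)) _; first by rewrite perm_cat2l.
    by rewrite -cat1s perm_catCA.
  apply: (tequiv_trans (tpar_equiv (tequiv_refl (Some y)) ho)).
  case: (tseq _ _) => //= z; by rewrite perm_catCA.
- move=> p p1 l p2 p' hc hs IH hc2 D hD.
  have := scong_den hc; rewrite hD; case E1: (den p1) => [D1|] //= hp1.
  have [c [t [D0 [r [hp hd ho]]]]] := IH _ E1.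
  exists c, t, D0, r; split => //; first exact: perm_trans hp1 hp.
  exact: tequiv_trans (tequiv_sym (scong_den hc2)) ho.
Qed.

Definition thread_proc (t : seq const) : proc := foldr (fun c p => Seq (Con c) p) Eps t.
Definition threads_proc (D : threads) : proc := foldr (fun t p => Par (thread_proc t) p) Eps D.

Lemma thread_proc_cat a b : scong (Seq (thread_proc a) (thread_proc b)) (thread_proc (a ++ b)).
Proof.
elim: a => [|c a IH] /=; first exact: sc_seq_epsl.
apply: sc_trans (sc_seqA _ _ _) _; apply: sc_seq => //; exact: sc_refl.
Qed.

Lemma threads_proc_cat A B : scong (threads_proc (A ++ B)) (Par (threads_proc A) (threads_proc B)).
Proof.
elim: A => [|a A IH] /=; first exact: sc_sym (sc_par_eps _).
apply: sc_trans (sc_par (sc_refl _) IH) _; exact: sc_sym (sc_parA _ _ _).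
Qed.

Lemma threads_proc1 t : scong (threads_proc [:: t]) (thread_proc t).
Proof. rewrite /=; apply: sc_trans (sc_parC _ _) _; exact: sc_par_eps. Qed.

Lemma scong_threads_proc p D : den p = Some D -> scong p (threads_proc D).
Proof.
elim: p D => [|c|p IHp q IHq|p IHp q IHq] D /=.
- case=> <-; exact: sc_refl.
- case=> <-; apply: sc_sym; apply: sc_trans (threads_proc1 _) _; exact: sc_seq_epsr.
- case Ep: (den p) => [x|]; last by case: (den q) => // [[|? [|? ?]]].
  case Eq: (den q) => [y|]; last by case: x {Ep} => [|? [|? ?]].
  have hp := IHp _ Ep; have hq := IHq _ Eq.
  case: x Ep hp => [|t1 [|t1' x]] Ep hp; case: y Eq hq => [|t2 [|t2' y]] Eq hq //= [<-].
  + apply: sc_trans (sc_seq hp (sc_refl _)) _; exact: sc_trans (sc_seq_epsl _) hq.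
  + apply: sc_trans (sc_seq hp (sc_refl _)) _; exact: sc_trans (sc_seq_epsl _) hq.
  + apply: sc_trans (sc_seq hp (sc_refl _)) _; exact: sc_trans (sc_seq_epsl _) hq.
  + apply: sc_trans (sc_seq (sc_refl _) hq) _; exact: sc_trans (sc_seq_epsr _) hp.
  + apply: sc_trans (sc_seq (sc_trans hp (threads_proc1 _)) (sc_trans hq (threads_proc1 _))) _.
    apply: sc_trans (thread_proc_cat _ _) _; apply: sc_sym; exact: threads_proc1.
  + apply: sc_trans (sc_seq (sc_refl _) hq) _; exact: sc_trans (sc_seq_epsr _) hp.
- case Ep: (den p) => [x|]; case Eq: (den q) => [y|] // [<-].
  apply: sc_trans (sc_par (IHp _ Ep) (IHq _ Eq)) _; apply: sc_sym; exact: threads_proc_cat.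
Qed.

Lemma scong_par_swap (x y z : proc) : scong (Par x (Par y z)) (Par y (Par x z)).
Proof.
apply: sc_trans (sc_sym (sc_parA _ _ _)) _.
apply: sc_trans (sc_par (sc_parC _ _) (sc_refl _)) _; exact: sc_parA.
Qed.

Lemma scong_threads_proc_perm A B : perm_eq A B -> scong (threads_proc A) (threads_proc B).
Proof.
elim: A B => [|a A IH] B hp.
  by case: B hp => [|b B] /perm_size //= _; exact: sc_refl.
have hin : a \in B by rewrite -(perm_mem hp) mem_head.
move: hp; case/splitPr: hin => B1 B2 hp.
have hp' : perm_eq A (B1 ++ B2).
  by rewrite -(perm_cons a); apply: perm_trans hp _; rewrite -cat1s perm_catCA.
apply: sc_trans (sc_par (sc_refl _) (sc_trans (IH _ hp') (threads_proc_cat _ _))) _.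
apply: sc_trans (scong_par_swap _ _ _) _; apply: sc_sym; exact: threads_proc_cat.
Qed.

Inductive wtrace : proc -> seq act -> proc -> Prop :=
| wtrace_nil p : wtrace p [::] p
| wtrace_tau p q s r : step p tau q -> wtrace q s r -> wtrace p s r
| wtrace_vis p q l s r : l <> tau -> step p l q -> wtrace q s r -> wtrace p (l :: s) r.

Definition can_wtrace p s := exists q, wtrace p s q.

Lemma wtrace_cat p s q s' r : wtrace p s q -> wtrace q s' r -> wtrace p (s ++ s') r.
Proof.
elim => {p s q} //= [p q s r' hs _ IH h|p q l s r' hl hs _ IH h].
- exact: wtrace_tau hs (IH h).
- exact: wtrace_vis hl hs (IH h).
Qed.

Lemma wtrace_ctx (f : proc -> proc) :
  (forall a l b, step a l b -> step (f a) l (f b)) ->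
  forall p s q, wtrace p s q -> wtrace (f p) s (f q).
Proof.
move=> hf p s q; elim => {p s q}.
- move=> p; exact: wtrace_nil.
- move=> p q s r hs _ IH; exact: wtrace_tau (hf _ _ _ hs) IH.
- move=> p q l s r hl hs _ IH; exact: wtrace_vis hl (hf _ _ _ hs) IH.
Qed.

Lemma can_wtrace_scong p p' s : scong p p' -> can_wtrace p' s -> can_wtrace p s.
Proof.
move=> hc [q h]; case: h hc.
- move=> p0 _; exists p; exact: wtrace_nil.
- move=> p0 q0 s0 r hs hw hc; exists r; apply: wtrace_tau _ hw.
  exact: st_cong hc hs (sc_refl _).
- move=> p0 q0 l s0 r hl hs hw hc; exists r; apply: wtrace_vis hl _ hw.
  exact: st_cong hc hs (sc_refl _).
Qed.

Lemma taus_trans p q r : taus p q -> taus q r -> taus p r.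
Proof. elim => // p0 q0 r0 hs _ IH h; exact: taus_step hs (IH h). Qed.

Lemma taus_wtrace p q s r : taus p q -> wtrace q s r -> wtrace p s r.
Proof. elim => // p0 q0 r0 hs _ IH h; exact: wtrace_tau hs (IH h). Qed.

Lemma wstep_vis p l q : l <> tau -> wstep inst p l q ->
  exists p1 p2, [/\ taus p p1, step p1 l p2 & taus p2 q].
Proof.
by case: l => //= *; match goal with H : exists _ _, _ |- _ => case: H => [a [b [? [? ?]]]] end;
  exists a, b.
Qed.

Lemma wstep_wtrace p l p' : wstep inst p l p' -> wtrace p (if l is tau then [::] else [:: l]) p'.
Proof.
case: l => [||||||k|a|] /=;
  try (by move=> h; apply: taus_wtrace h (wtrace_nil _));
  by move=> [p1 [p2 [h1 [h2 h3]]]]; apply: taus_wtrace h1 (wtrace_vis _ h2 _) => //;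
     apply: taus_wtrace h3 (wtrace_nil _).
Qed.

Lemma weak_bisimulation_sym (B : proc -> proc -> Prop) : weak_bisimulation inst B ->
  weak_bisimulation inst (fun x y => B y x).
Proof. by move=> hB p q h; have [h1 h2] := hB _ _ h; split. Qed.

Lemma weak_bisimulation_wtrace (B : proc -> proc -> Prop) : weak_bisimulation inst B ->
  forall p s p', wtrace p s p' -> forall q, B p q -> can_wtrace q s.
Proof.
move=> hB p s p'; elim => {p s p'}.
- by move=> p q _; exists q; exact: wtrace_nil.
- move=> p p1 s r hs _ IH q hpq.
  have [h1 _] := hB _ _ hpq; have [q1 hw hb] := h1 _ _ hs.
  have [r' hr] := IH _ hb; exists r'; exact: wtrace_cat (wstep_wtrace hw) hr.
- move=> p p1 l s r hl hs _ IH q hpq.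
  have [h1 _] := hB _ _ hpq; have [q1 hw hb] := h1 _ _ hs.
  have [r' hr] := IH _ hb; exists r'.
  by move: (wtrace_cat (wstep_wtrace hw) hr); case: l hl {hs hw}.
Qed.

Lemma perm_eq_cons2 (x y : seq const) (A B : threads) : perm_eq (x :: A) (y :: B) ->
  (x = y /\ perm_eq A B) \/ exists C, perm_eq A (y :: C) /\ perm_eq B (x :: C).
Proof.
move=> h; case: (eqVneq x y) => [exy|nxy].
  by left; split => //; move: h; rewrite exy perm_cons.
right; have hin : y \in A.
  by move: (perm_mem h y); rewrite !inE eqxx eq_sym (negbTE nxy) /= => ->.
move: h; case/splitPr: hin => A1 A2 h; exists (A1 ++ A2); split.
  by rewrite -cat1s perm_catCA.
have h' : perm_eq (y :: x :: A1 ++ A2) (y :: B).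
  apply: (perm_trans _ h); have := perm_catCA (x :: A1) [:: y] A2.
  by move=> /(_ (x :: A1 ++ y :: A2)) /= <-; rewrite perm_refl.
by rewrite perm_cons perm_sym in h'.
Qed.

Lemma tequiv_Some p' (X D1 : threads) : tequiv (den p') (tpar (Some X) (Some D1)) ->
  exists D', den p' = Some D' /\ perm_eq D' (X ++ D1).
Proof. by case: (den p') => //= D' h; exists D'. Qed.

Lemma tseq_Eps_thread t : tseq (Some [::]) (Some (thread t)) = Some (thread t).
Proof. by []. Qed.

Lemma tseq_Con_thread c t : tseq (Some [:: [:: c]]) (Some (thread t)) = Some (thread (c :: t)).
Proof. exact: (tseq_thread [:: c] t). Qed.

Lemma tseq_Con2_thread a b t :
  tseq (Some [:: [:: a; b]]) (Some (thread t)) = Some (thread [:: a, b & t]).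
Proof. exact: (tseq_thread [:: a; b] t). Qed.

Lemma all_thread (g : pred (seq const)) t : g t -> all g (thread t).
Proof. by case: t => //= ? ? ->. Qed.

Lemma size_thread t : size (thread t) <= 1. Proof. by case: t. Qed.

(* The constants of a thread [Z bL] and of all its derivatives. *)
Definition zuvw (c : const) : bool :=
  match c with cZ | cU _ | cV _ | cW _ _ => true | _ => false end.

Definition uv_const (c : const) : bool :=
  match c with cU k | cV k => inN inst k | _ => false end.

Lemma uv_const_zuvw c : uv_const c -> zuvw c. Proof. by case: c. Qed.

Section Word.
Variables (X : eqType) (pot : const -> seq X).

Definition word (t : seq const) : seq X := flatten (map pot t).
Definition threads_word (T : threads) : seq X := flatten (map word T).

Lemma word_cons c t : word (c :: t) = pot c ++ word t. Proof. by []. Qed.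

Lemma word_cat s t : word (s ++ t) = word s ++ word t.
Proof. by rewrite /word map_cat flatten_cat. Qed.

Lemma threads_word_thread t : threads_word (thread t) = word t.
Proof. by case: t => // x t; rewrite /threads_word /= cats0. Qed.

End Word.

(* [observed em l s s']: [s'] is what is left of the potential [s] after the
   action [l], which consumes [em l] if it is observable. *)
Definition observed (X : eqType) (em : act -> option X) l (s s' : seq X) :=
  if em l is Some a then subseq (a :: s') s else subseq s' s.

Lemma observedN (X : eqType) (em : act -> option X) l s s' :
  em l = None -> observed em l s s' = subseq s' s.
Proof. by rewrite /observed => ->. Qed.

(* The letters, resp. indices, that a constant may still emit. *)
Definition const_letters (c : const) : seq Sigma :=
  match c with cU k => uw inst k | cV k => vw inst k | cW w _ => w | _ => [::] end.
Definition letter_act (l : act) : bool :=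
  match l with tau | lZ | aSym _ => true | _ => false end.
Definition letter_of (l : act) : option Sigma := if l is aSym a then Some a else None.

Lemma I_no_letter_act l r : delta cI l r -> letter_act l -> False.
Proof. by move=> h; inversion h. Qed.

Lemma zuvw_step_letters c t l r : zuvw c -> all zuvw t -> delta c l r -> letter_act l ->
  exists T', [/\ tseq (den r) (Some (thread t)) = Some T', size T' <= 1, all (all zuvw) T' &
    observed letter_of l (word const_letters (c :: t)) (threads_word const_letters T')].
Proof.
move=> hc ht hd; case: hd hc => //; intros;
  rewrite ?tseq_Eps_thread ?tseq_Con_thread ?tseq_Con2_thread;
  (eexists; split; [reflexivity | exact: size_thread | |]).
all: try (apply: all_thread; exact: ht).
all: try by rewrite /= ht.
all: rewrite threads_word_thread !word_cons.
all: try by rewrite observedN // subseq_cons.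
all: by rewrite /observed /= ?eqxx ?subseq_refl.
Qed.

Definition const_indices (c : const) : seq nat :=
  match c with
  | cU k | cV k => [:: k]
  | cW _ k => if k is 0 then [::] else [:: k]
  | _ => [::] end.
Definition index_act (l : act) : bool :=
  match l with tau | lZ | aIdx _ => true | _ => false end.
Definition index_of (l : act) : option nat := if l is aIdx k then Some k else None.

Lemma S_no_index_act l r : delta cS l r -> index_act l -> False.
Proof. by move=> h; inversion h. Qed.

Lemma zuvw_step_indices c t l r : zuvw c -> all zuvw t -> delta c l r -> index_act l ->
  exists T', [/\ tseq (den r) (Some (thread t)) = Some T', size T' <= 1, all (all zuvw) T' &
    observed index_of l (word const_indices (c :: t)) (threads_word const_indices T')].
Proof.
move=> hc ht hd; case: hd hc => //; intros;
  rewrite ?tseq_Eps_thread ?tseq_Con_thread ?tseq_Con2_thread;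
  (eexists; split; [reflexivity | exact: size_thread | |]).
all: try (apply: all_thread; exact: ht).
all: try by rewrite /= ht.
all: rewrite threads_word_thread !word_cons.
all: try (match goal with H : is_true (inN inst ?k) |- _ => destruct k as [|k]; [by move: H|] end).
all: try by rewrite /observed /= ?eqxx ?subseq_refl.
all: by rewrite observedN //=; exact: subseq_cons.
Qed.

(* The constants that [C] spawns by tau steps, and their derivatives. *)
Definition spawned (c : const) : bool :=
  match c with cG | cGv | cU _ | cV _ | cW _ _ => true | _ => false end.

(* The threads besides [Z bR] on the right, before and after the probe [lI] or [lS]. *)
Definition pre_probe (t : seq const) : bool :=
  match t with [:: cC] => true | _ => all spawned t end.
Definition post_probe (t : seq const) : bool :=
  match t with [:: cC] | [:: cI] | [:: cS] => true | _ => all spawned t end.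
Definition probe (l : act) : bool := match l with lI | lS => true | _ => false end.

Lemma spawned_pre_probe t : all spawned t -> pre_probe t.
Proof. by case: t => // [[]] // []. Qed.

Lemma spawned_post_probe t : all spawned t -> post_probe t.
Proof. by case: t => // [[]] // []. Qed.

Lemma pre_post_probe t : pre_probe t -> post_probe t.
Proof. by case: t => // [[]] // []. Qed.

Lemma pre_probe_tau c t l r : pre_probe (c :: t) -> delta c l r -> l = tau ->
  exists R, tseq (den r) (Some (thread t)) = Some R /\ all pre_probe R.
Proof.
move=> hg hd; case: hd hg => //; intros; try discriminate;
  rewrite ?tseq_Eps_thread ?tseq_Con_thread ?tseq_Con2_thread.
all: try (case: t hg => [|? ?] hg; [eexists; split; [reflexivity|by []] | by []]).
all: eexists; split; first reflexivity.
all: try (apply: all_thread; apply: spawned_pre_probe; by move: hg).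
all: by move: hg => /= hg; rewrite ?andbT.
Qed.

Lemma post_probe_tau c t l r : post_probe (c :: t) -> delta c l r -> l = tau ->
  exists R, tseq (den r) (Some (thread t)) = Some R /\ all post_probe R.
Proof.
move=> hg hd; case: hd hg => //; intros; try discriminate;
  rewrite ?tseq_Eps_thread ?tseq_Con_thread ?tseq_Con2_thread.
all: try (case: t hg => [|? ?] hg; [eexists; split; [reflexivity|by []] | by []]).
all: eexists; split; first reflexivity.
all: try (apply: all_thread; apply: spawned_post_probe; by move: hg).
all: try (by move: hg => /= hg; rewrite ?andbT).
all: by case: t hg.
Qed.

Lemma pre_probe_probe c t l r : pre_probe (c :: t) -> delta c l r -> probe l ->
  exists R, tseq (den r) (Some (thread t)) = Some R /\ all post_probe R.
Proof.
move=> hg hd; case: hd hg => //=; intros;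
  rewrite ?tseq_Eps_thread ?tseq_Con_thread ?tseq_Con2_thread;
  by case: t hg => [|? ?] hg; [eexists; split; [reflexivity|by []] | by []].
Qed.

Lemma post_probe_no_lZ c t r : post_probe (c :: t) -> delta c lZ r -> False.
Proof. by move=> hg hd; inversion hd; subst. Qed.

Section ZThread.
Variable body : seq const.

(* Either the thread [Z body] is still intact, or its remainder is among the other threads. *)
Definition Z_state (g : pred (seq const)) (D : threads) :=
  exists D0, all g D0 /\ (perm_eq D ((cZ :: body) :: D0) \/ perm_eq D D0).

Lemma Z_state_step (g g' : pred (seq const)) l p p' D :
  (forall t, g t -> g' t) -> all g' (thread body) ->
  (forall c t r, g (c :: t) -> delta c l r ->
     exists R, tseq (den r) (Some (thread t)) = Some R /\ all g' R) ->
  l <> lZ -> step p l p' -> den p = Some D -> Z_state g D ->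
  exists D', den p' = Some D' /\ Z_state g' D'.
Proof.
move=> hgg hb hloc hl hs hD [D0 [hg0 hor]].
have [c [t [D1 [r [hp hd ho]]]]] := step_den hs hD.
have wk A : all g A -> all g' A by apply: sub_all.
case: hor; rewrite perm_sym => hpD; last first.
  have := hg0; rewrite (perm_all _ (perm_trans hpD hp)) /= => /andP [hct hC].
  have [R [hR hgR]] := hloc _ _ _ hct hd.
  rewrite hR in ho; have [D' [E hD']] := tequiv_Some ho.
  exists D'; split => //; exists (R ++ D1); split; last by right.
  by rewrite all_cat hgR wk.
case/perm_eq_cons2: (perm_trans hpD hp) => [[[ec et] hD01]|[C [h1 h2]]].
- subst c t; inversion hd; subst => //.
  have [D' [E hD']] := tequiv_Some ho.
  exists D'; split => //; exists (thread body ++ D1); split; last by right.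
  by rewrite all_cat hb wk // -(perm_all _ hD01).
- have := hg0; rewrite (perm_all _ h1) /= => /andP [hct hC].
  have [R [hR hgR]] := hloc _ _ _ hct hd.
  rewrite hR in ho; have [D' [E hD']] := tequiv_Some ho.
  exists D'; split => //; exists (R ++ C); split; first by rewrite all_cat hgR wk.
  left; apply: perm_trans hD' _; apply: perm_trans (_ : perm_eq _ (R ++ (cZ :: body) :: C)) _.
    by rewrite perm_cat2l.
  by rewrite -cat1s perm_catCA.
Qed.

Lemma Z_state_taus (g : pred (seq const)) p q D : all g (thread body) ->
  (forall c t l r, g (c :: t) -> delta c l r -> l = tau ->
     exists R, tseq (den r) (Some (thread t)) = Some R /\ all g R) ->
  taus p q -> den p = Some D -> Z_state g D -> exists D', den q = Some D' /\ Z_state g D'.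
Proof.
move=> hb hloc h; elim: h D => [p0|p0 q0 r0 hs _ IH] D hD hI; first by exists D.
have [D' [hD' hI']] := Z_state_step (fun t (x : g t) => x) hb
  (fun c t r hg hd => hloc c t _ r hg hd erefl) (fun e => match e with end) hs hD hI.
exact: IH hD' hI'.
Qed.

(* After the probe, only the head [Z] of [Z body] can perform [lZ]. *)
Lemma Z_state_lZ p p' D : step p lZ p' -> den p = Some D -> Z_state post_probe D ->
  exists D' D1, den p' = Some D' /\ perm_eq D' (thread body ++ D1).
Proof.
move=> hs hD [D0 [hg0 hor]].
have [c [t [D1 [r [hp hd ho]]]]] := step_den hs hD.
case: hor; rewrite perm_sym => hpD; last first.
  have := hg0; rewrite (perm_all _ (perm_trans hpD hp)) /= => /andP [hct _].
  by case: (post_probe_no_lZ hct hd).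
case/perm_eq_cons2: (perm_trans hpD hp) => [[[ec et] hD01]|[C [h1 h2]]].
- subst c t; inversion hd; subst => //.
  have [D' [E hD']] := tequiv_Some ho.
  by exists D', D1.
- have := hg0; rewrite (perm_all _ h1) /= => /andP [hct _].
  by case: (post_probe_no_lZ hct hd).
Qed.

End ZThread.

Lemma validW_suffix k w0 w : inN inst k -> (w0 = uw inst k \/ w0 = vw inst k) ->
  suffix w w0 -> validW inst w k.
Proof.
move=> hk hw0 hs; rewrite /validW; have -> : (k == 0) = false.
  by apply/negbTE; rewrite -lt0n; case/andP: hk.
by split => //; case: hw0 => <-; rewrite hs ?orbT.
Qed.

Lemma validW0_suffix k w0 w : inN inst k -> (w0 = uw inst k \/ w0 = vw inst k) ->
  suffix w w0 -> validW inst w 0.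
Proof. by move=> hk hw0 hs; exists k; split => //; case: hw0 => <-; rewrite hs ?orbT. Qed.

Lemma wtrace_W_letters k w0 w : inN inst k -> (w0 = uw inst k \/ w0 = vw inst k) ->
  suffix w w0 -> wtrace (Con (cW w k)) (map aSym w) (Con (cW [::] k)).
Proof.
move=> hk hw0; elim: w => [|a w IH] hs /=; first exact: wtrace_nil.
apply: wtrace_vis (st_rule (dWa _)) (IH _) => //; first exact: validW_suffix hw0 hs.
exact: suffix_trans (suffix_cons w a) hs.
Qed.

Lemma wtrace_W0_silent k w0 w : inN inst k -> (w0 = uw inst k \/ w0 = vw inst k) ->
  suffix w w0 -> wtrace (Con (cW w 0)) [::] (Con (cW [::] 0)).
Proof.
move=> hk hw0; elim: w => [|a w IH] hs /=; first exact: wtrace_nil.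
apply: wtrace_tau (st_rule (dWt _)) (IH _); first exact: validW0_suffix hw0 hs.
exact: suffix_trans (suffix_cons w a) hs.
Qed.

Lemma uv_const_letters c : uv_const c -> wtrace (Con c) (map aSym (const_letters c)) Eps.
Proof.
have W_letters k w0 : inN inst k -> (w0 = uw inst k \/ w0 = vw inst k) ->
    wtrace (Con (cW w0 k)) (map aSym w0) Eps.
  move=> hk hw0; rewrite -[map _ _]cats0.
  apply: wtrace_cat (wtrace_W_letters hk hw0 (suffix_refl _)) _.
  apply: wtrace_tau (st_rule (dWkt hk (validW_suffix hk hw0 (suffix0s _)))) _.
  apply: wtrace_tau (st_rule (dWe (validW0_suffix hk hw0 (suffix0s _)))) _; exact: wtrace_nil.
case: c => // k hk /=.
- by apply: wtrace_tau (st_rule (dU hk)) _; apply: W_letters hk _; left.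
- by apply: wtrace_tau (st_rule (dV hk)) _; apply: W_letters hk _; right.
Qed.

Lemma uv_const_indices c : uv_const c -> wtrace (Con c) (map aIdx (const_indices c)) Eps.
Proof.
have W_index k w0 : inN inst k -> (w0 = uw inst k \/ w0 = vw inst k) ->
    wtrace (Con (cW w0 k)) [:: aIdx k] Eps.
  move=> hk hw0.
  apply: wtrace_vis (st_rule (dWk hk (validW_suffix hk hw0 (suffix_refl _)))) _ => //.
  rewrite -[[::]]cats0; apply: wtrace_cat (wtrace_W0_silent hk hw0 (suffix_refl _)) _.
  apply: wtrace_tau (st_rule (dWe (validW0_suffix hk hw0 (suffix0s _)))) _; exact: wtrace_nil.
case: c => // k hk /=.
- by apply: wtrace_tau (st_rule (dU hk)) _; apply: W_index hk _; left.
- by apply: wtrace_tau (st_rule (dV hk)) _; apply: W_index hk _; right.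
Qed.

Section Unfold.
Variables (X : eqType) (pot : const -> seq X) (lab : X -> act).
Hypothesis uv_unfold : forall c, uv_const c -> wtrace (Con c) (map lab (pot c)) Eps.

Lemma can_wtrace_par_thread body P : all uv_const body ->
  can_wtrace (Par (thread_proc body) P) (map lab (word pot body)).
Proof.
elim: body P => [|c b IH] P /=; first by move=> _; exists (Par Eps P); exact: wtrace_nil.
case/andP => hc hb; rewrite word_cons map_cat.
have h1 : wtrace (Par (Seq (Con c) (thread_proc b)) P) (map lab (pot c))
    (Par (Seq Eps (thread_proc b)) P).
  apply: (wtrace_ctx (f := fun a => Par (Seq a (thread_proc b)) P)) (uv_unfold hc).
  by move=> a l b' h; apply: st_parl; apply: st_seq.
have [q hq] : can_wtrace (Par (Seq Eps (thread_proc b)) P) (map lab (word pot b)).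
  apply: can_wtrace_scong (IH _ hb); apply: sc_par; [exact: sc_seq_epsl | exact: sc_refl].
by exists q; exact: wtrace_cat h1 hq.
Qed.

Lemma can_wtrace_thread body p D D1 : all uv_const body -> den p = Some D ->
  perm_eq D (thread body ++ D1) -> can_wtrace p (map lab (word pot body)).
Proof.
move=> hb hd hp; case: body hb hp => [|c b] hb hp; first by exists p; exact: wtrace_nil.
apply: can_wtrace_scong (sc_trans (scong_threads_proc hd) (scong_threads_proc_perm hp)) _.
exact: can_wtrace_par_thread.
Qed.

Lemma probe_lZ_unfolds lM Q Q1 Q2 bQ : probe lM -> all uv_const bQ ->
  den Q = Some [:: [:: cC]; cZ :: bQ] -> wstep inst Q lM Q1 -> wstep inst Q1 lZ Q2 ->
  can_wtrace Q1 (lZ :: map lab (word pot bQ)).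
Proof.
move=> hlM hbQ hQ hw1 hw2.
have lM_tau : lM <> tau by move=> e; rewrite e in hlM.
have lM_lZ : lM <> lZ by move=> e; rewrite e in hlM.
have [a [b [ta sb tb]]] := wstep_vis lM_tau hw1.
have lZ_tau : lZ <> tau :> act by [].
have [c [d [tc sd _]]] := wstep_vis lZ_tau hw2.
have hspawned : all spawned bQ by apply: sub_all hbQ => -[].
have hpre : all pre_probe (thread bQ) by apply/all_thread/spawned_pre_probe.
have hpost : all post_probe (thread bQ) by apply/all_thread/spawned_post_probe.
have hQ0 : Z_state bQ pre_probe [:: [:: cC]; cZ :: bQ].
  exists [:: [:: cC]]; split => //; left.
  by rewrite -[[:: [:: cC]; cZ :: bQ]]cat1s perm_catC.
have [Da [hDa hIa]] := Z_state_taus hpre pre_probe_tau ta hQ hQ0.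
have [Db [hDb hIb]] := Z_state_step pre_post_probe hpost
  (fun c t r hg hd => pre_probe_probe hg hd hlM) lM_lZ sb hDa hIa.
have [Dc [hDc hIc]] := Z_state_taus hpost post_probe_tau (taus_trans tb tc) hDb hIb.
have [Dd [D1 [hDd hpd]]] := Z_state_lZ sd hDc hIc.
have [q hq] := can_wtrace_thread hbQ hDd hpd.
by exists q; apply: taus_wtrace tc (wtrace_vis _ sd hq).
Qed.

End Unfold.

Lemma Z_head_step Y b : den Y = Some [:: cZ :: b] -> exists Y', step Y lZ Y'.
Proof.
move=> hY; exists (Par (Seq Eps (thread_proc b)) Eps).
apply: st_cong (scong_threads_proc hY) _ (sc_refl _).
by apply/st_parl/st_seq/st_rule/dZ2.
Qed.

Section Blocked.
Variables (X : eqType) (cM : const) (pot : const -> seq X) (okl : pred act)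
  (em : act -> option X).
Hypothesis okl_tau : okl tau.
Hypothesis em_tau : em tau = None.
Hypothesis cM_blocked : forall l r, delta cM l r -> okl l -> False.
Hypothesis zuvw_step_observed : forall c t l r, zuvw c -> all zuvw t -> delta c l r -> okl l ->
  exists T', [/\ tseq (den r) (Some (thread t)) = Some T', size T' <= 1, all (all zuvw) T' &
                 observed em l (word pot (c :: t)) (threads_word pot T')].

Definition blocked_state D T := [/\ perm_eq D ([:: cM] :: T), size T <= 1 & all (all zuvw) T].

Lemma blocked_step p l p' D T : step p l p' -> okl l -> den p = Some D -> blocked_state D T ->
  exists D' T', [/\ den p' = Some D', blocked_state D' T' &
    observed em l (threads_word pot T) (threads_word pot T')].
Proof.
move=> hs hl hD [hp hsz hz].
have [c [t [D0 [r [hp2 hd ho]]]]] := step_den hs hD.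
have hp' : perm_eq ([:: cM] :: T) D by rewrite perm_sym.
case/perm_eq_cons2: (perm_trans hp' hp2) => [[[ec et] _]|[C [h1 h2]]].
  by subst c; case: (cM_blocked hd hl).
have hC : C = [::] by move: (perm_size h1) hsz => /= ->; case: C {h1 h2}.
subst C; case: (perm_eq_shape h1) => [[//]|[t0 [eT [e0]]]|[//]]; subst T t0.
move: hz => /= /andP[/andP [hzc hzt] _].
have [T' [hr hs' hz' he]] := zuvw_step_observed hzc hzt hd hl.
move: ho; rewrite hr; case E: (den p') => [D'|] //= hpD'.
exists D', T'; split => //.
  split => //; apply: perm_trans hpD' _.
  by rewrite perm_sym -cat1s perm_catC perm_cat2l perm_sym.
by rewrite /threads_word /= cats0.
Qed.

Lemma blocked_wtrace_observations p s q : wtrace p s q -> all okl s ->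
  forall D T, den p = Some D -> blocked_state D T -> subseq (pmap em s) (threads_word pot T).
Proof.
elim => {p s q}.
- by move=> p _ D T _ _; exact: sub0seq.
- move=> p q s r hs _ IH hok D T hD hI.
  have [D' [T' [hD' hI' he]]] := blocked_step hs okl_tau hD hI.
  move: he; rewrite observedN // => he.
  exact: subseq_trans (IH hok _ _ hD' hI') he.
- move=> p q l s r hl hs _ IH /= /andP[hokl hok] D T hD hI.
  have [D' [T' [hD' hI' he]]] := blocked_step hs hokl hD hI.
  have := IH hok _ _ hD' hI'.
  move: he; rewrite /observed; case: (em l) => [a|] he /= hsub.
    by apply: subseq_trans he; rewrite /= eqxx.
  exact: subseq_trans hsub he.
Qed.

Section Probe.
Variables (lM : act) (lab : X -> act).
Hypothesis C_probe : delta cC lM (Con cM).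
Hypothesis probe_lM : probe lM.
Hypothesis uv_unfold : forall c, uv_const c -> wtrace (Con c) (map lab (pot c)) Eps.
Hypothesis okl_lab : forall x, okl (lab x).
Hypothesis em_lab : forall x, em (lab x) = Some x.
Hypothesis okl_lZ : okl lZ.
Hypothesis em_lZ : em lZ = None.
Hypothesis pot_Z : pot cZ = [::].

(* The left process probes with [lM] and then fires its [Z]; the right process
   must follow, after which it can unfold the whole word [bQ]. *)
Lemma probe_word_subseq (B : proc -> proc -> Prop) Y Q bY bQ :
  weak_bisimulation inst B -> B (Par (Con cC) Y) Q ->
  den Y = Some [:: cZ :: bY] -> den Q = Some [:: [:: cC]; cZ :: bQ] ->
  all zuvw bY -> all uv_const bQ -> subseq (word pot bQ) (word pot bY).
Proof.
move=> hB hBYQ hY hQ hbY hbQ.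
have [Y' hYZ] := Z_head_step hY.
have [match1 _] := hB _ _ hBYQ.
have [Q1 hw1 hB1] := match1 _ _ (st_parl _ (st_rule C_probe)).
have [match2 _] := hB _ _ hB1.
have [Q2 hw2 _] := match2 _ _ (st_parr (Con cM) hYZ).
have [q hq] := probe_lZ_unfolds uv_unfold probe_lM hbQ hQ hw1 hw2.
have [r hr] := weak_bisimulation_wtrace (weak_bisimulation_sym hB) hq hB1.
have hMY : den (Par (Con cM) Y) = Some ([:: cM] :: [:: cZ :: bY]) by rewrite /= hY.
have hblocked : blocked_state [:: [:: cM]; cZ :: bY] [:: cZ :: bY].
  by split => //; rewrite /= hbY.
have hok : all okl (lZ :: map lab (word pot bQ)).
  by rewrite /= okl_lZ all_map; apply/allP => x _; exact: okl_lab.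
have := blocked_wtrace_observations hr hok hMY hblocked.
have pmap_lab w : pmap em (map lab w) = w by elim: w => //= x w ->; rewrite em_lab.
by rewrite /= em_lZ pmap_lab /threads_word /= word_cons pot_Z cats0.
Qed.

End Probe.

End Blocked.

Lemma wbisim_C_Z_word_subseq (B : proc -> proc -> Prop) Y Q bY bQ :
  weak_bisimulation inst B -> B (Par (Con cC) Y) Q ->
  den Y = Some [:: cZ :: bY] -> den Q = Some [:: [:: cC]; cZ :: bQ] ->
  all uv_const bY -> all uv_const bQ ->
  subseq (word const_letters bQ) (word const_letters bY) /\
  subseq (word const_indices bQ) (word const_indices bY).
Proof.
move=> hB hBYQ hY hQ hbY hbQ.
have zbY : all zuvw bY by apply: sub_all hbY; exact: uv_const_zuvw.
split.
- apply: (probe_word_subseq _ _ I_no_letter_act zuvw_step_letters (dC1 inst) _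
    uv_const_letters _ _ _ _ _ hB hBYQ hY hQ zbY hbQ) => //.
- apply: (probe_word_subseq _ _ S_no_index_act zuvw_step_indices (dC2 inst) _
    uv_const_indices _ _ _ _ _ hB hBYQ hY hQ zbY hbQ) => //.
Qed.

Lemma den_Seq p q : den (Seq p q) = tseq (den p) (den q). Proof. by []. Qed.

Lemma den_C_par Y b :
  den Y = Some [:: cZ :: b] -> den (Par (Con cC) Y) = Some [:: [:: cC]; cZ :: b].
Proof. by move=> /= ->. Qed.

Lemma den_PV ks : den (PV Sigma ks) = Some (thread (map cV ks)).
Proof. by elim: ks => // k ks IH; rewrite /PV /= -/(PV Sigma ks) IH; exact: tseq_Con_thread. Qed.

Lemma den_PU ks : den (PU Sigma ks) = Some (thread (map cU ks)).
Proof. by elim: ks => // k ks IH; rewrite /PU /= -/(PU Sigma ks) IH; exact: tseq_Con_thread. Qed.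

Lemma all_uv_const_map_cV ks : all (inN inst) ks -> all uv_const (map cV ks).
Proof. by rewrite all_map. Qed.

Lemma all_uv_const_map_cU ks : all (inN inst) ks -> all uv_const (map cU ks).
Proof. by rewrite all_map. Qed.

Lemma letters_map_cV ks : word const_letters (map cV ks) = flatten (map (vw inst) ks).
Proof. by elim: ks => // k ks IH; rewrite word_cons IH. Qed.

Lemma letters_map_cU ks : word const_letters (map cU ks) = flatten (map (uw inst) ks).
Proof. by elim: ks => // k ks IH; rewrite word_cons IH. Qed.

Lemma indices_map_cV ks : word const_indices (map cV ks) = ks.
Proof. by elim: ks => // k ks IH; rewrite word_cons IH. Qed.

Lemma indices_map_cU ks : word const_indices (map cU ks) = ks.
Proof. by elim: ks => // k ks IH; rewrite word_cons IH. Qed.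

End ProcessAlgebraG.

Theorem lemma8 (Sigma : finType) (inst : seq (seq Sigma * seq Sigma))
  (hSigma : 1 < #|Sigma|)
  (hnonempty : all (fun p => (p.1 != [::]) && (p.2 != [::])) inst)
  (v1 v2 u2 : seq nat)
  (hv1 : all (inN inst) v1) (hv2 : all (inN inst) v2) (hu2 : all (inN inst) u2)
  (hu2ne : u2 != [::]) :
  wbisim inst
    (Par (Con (cC Sigma)) (Seq (Con (cZ Sigma)) (PV Sigma v1)))
    (Par (Con (cC Sigma)) (Seq (Seq (Con (cZ Sigma)) (PV Sigma v2)) (PU Sigma u2))) ->
  pcp_solution inst.
Proof.
move=> [B [hB hBLR]].
pose bL := map (@cV Sigma) v1; pose bR := map (@cV Sigma) v2 ++ map (@cU Sigma) u2.
have denL : den (Seq (Con (cZ Sigma)) (PV Sigma v1)) = Some [:: cZ Sigma :: bL].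
  by rewrite den_Seq den_PV tseq_Con_thread.
have denR :
    den (Seq (Seq (Con (cZ Sigma)) (PV Sigma v2)) (PU Sigma u2)) = Some [:: cZ Sigma :: bR].
  by rewrite !den_Seq den_PV den_PU tseq_Con_thread tseq_thread.
have uvL : all (uv_const inst) bL by exact: all_uv_const_map_cV.
have uvR : all (uv_const inst) bR by rewrite all_cat all_uv_const_map_cV ?all_uv_const_map_cU.
have [lettersRL indicesRL] := wbisim_C_Z_word_subseq hB hBLR denL (den_C_par denR) uvL uvR.
have [lettersLR indicesLR] :=
  wbisim_C_Z_word_subseq (weak_bisimulation_sym hB) hBLR denR (den_C_par denL) uvR uvL.
have := subseq_anti (introT andP (conj indicesRL indicesLR)).
rewrite word_cat !indices_map_cV indices_map_cU => v1E.
have := subseq_anti (introT andP (conj lettersRL lettersLR)).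
rewrite word_cat !letters_map_cV letters_map_cU -v1E map_cat flatten_cat => /eqP.
rewrite eqseq_cat // => /andP[_ /eqP uvE].
by exists u2; split; last split.
Qed.
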